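(* Let $\mathcal X$ be a Banach space and $0<T\le1$. Let $J:\{(v,u):0\le u\le v\le T\}\to\mathcal X$ be continuous with $J_{u,u}=0$, and for $u\le m\le v$ set $\delta J_{v,m,u}=J_{v,u}-J_{v,m}-J_{m,u}$. Fix $0\le s\le t\le T$ and suppose that the limit $$\mathscr J_{t,s}=\lim_{n\to\infty}\sum_{[u,v]\in\pi_n(s,t)}J_{v,u}$$ exists in $\mathcal X$, where $\pi_n(s,t)$ is the $n$-th dyadic partition of $[s,t]$ into $2^n$ intervals of length $2^{-n}(t-s)$. Let $l\in\mathbb N$. For $i=1,\dots,l$, let $\mu_i>1$, $0\le\lambda_i<\mu_i$, $\nu_i\in[0,\mu_i]$, $\varepsilon_i\in[0,1)$ and $A_i\ge0$ be such that $$|\delta J_{v,m,u}|_{\mathcal X}\le\sum_{i=1}^lA_i|t-u|^{-\lambda_i}|u-m|^{\nu_i}|m-v|^{\mu_i-\nu_i}m^{-\varepsilon_i}$$ for all $s\le u\le m\le v\le t$ with $m>0$. Let $\omega\in[0,\max_i\varepsilon_i]$ be such that $(\varepsilon_i-\omega)_+<\mu_i-\lambda_i$ for each $i=1,\dots,l$. Then $$s^\omega|\mathscr J_{t,s}-J_{t,s}|_{\mathcal X}\lesssim\sum_{i=1}^lA_i|t-s|^{\mu_i-\lambda_i-(\varepsilon_i-\omega)_+},$$ with an implied constant depending only on the exponents $\mu_i,\lambda_i,\nu_i,\varepsilon_i,\omega$.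
   Context: Here $x_+=\max(x,0)$. The $n$-th dyadic partition is $$\pi_n(s,t)=\{s\le s+2^{-n}(t-s)\le\dots\le t-2^{-n}(t-s)\le t\},$$ and $[u,v]\in\pi_n(s,t)$ ranges over its consecutive intervals. *)

From HB Require Import structures.
From mathcomp Require Import all_boot all_order all_algebra.
From mathcomp Require Import all_classical all_reals all_analysis.
Set Implicit Arguments. Unset Strict Implicit. Unset Printing Implicit Defensive.
Import Order.TTheory GRing.Theory Num.Theory.
Import numFieldNormedType.Exports.
Local Open Scope classical_set_scope.
Local Open Scope ring_scope.

Definition dyadic_pt {R : realType} (s t : R) (n k : nat) : R :=
  s + (k%:R * (t - s)) / (2 ^+ n).

Definition dyadic_sum {R : realType} {X : normedModType R}
  (J : R -> R -> X) (s t : R) (n : nat) : X :=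
  \sum_(k < 2 ^ n) J (dyadic_pt s t n k.+1) (dyadic_pt s t n k).

Definition deltaJ {R : realType} {X : normedModType R}
  (J : R -> R -> X) (v m u : R) : X := J v u - J v m - J m u.

Definition pospart {R : realType} (x : R) : R := Num.max x 0.

From HB Require Import structures.
From mathcomp Require Import all_boot all_order all_algebra.
From mathcomp Require Import all_classical all_reals all_analysis.
From mathcomp Require Import ring lra zify.
Import Order.TTheory GRing.Theory Num.Theory.
Import numFieldNormedType.Exports.
Local Open Scope classical_set_scope.
Local Open Scope ring_scope.

(* The dyadic sums telescope: the n-th sum minus the (n+1)-st is the sum of
   [deltaJ] over the intervals [[u, v]] of the n-th partition, split at their
   midpoints [m].  With [h = 2^-n (t - s)] the k-th such term is, after
   [s^omega m^-eps <= m^-(eps - omega)_+] and [m >= (k + 1) h / 2], at most a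
   constant times [h^(mu - lam - b) (2^n - k)^-al (k + 1)^-b], where
   [b = (eps - omega)_+] and [al <= lam] is chosen in [(lam + 1 - mu, 1)].
   Summing the discrete convolution over k costs a factor [2^(n (1 - al - b))],
   so level n contributes [(t - s)^(mu - lam - b) 2^(n (1 - al - mu + lam))],
   a geometric series; the bound passes to the limit of the dyadic sums. *)
Section PowerSums.
Context {R : realType}.

Lemma gt0_powRD (x r s : R) : 0 < x -> x `^ (r + s) = x `^ r * x `^ s.
Proof. by move=> x0; rewrite powRD //; apply/implyP => _; rewrite gt_eqF. Qed.

Lemma powR_inv (y r : R) : 0 <= y -> (y^-1) `^ r = y `^ (- r).
Proof. by move=> y0; rewrite -powR_inv1// -powRrM mulN1r. Qed.

Lemma powR_amgm (a b c : R) : 0 <= a -> 0 <= b -> 0 <= c <= 1 ->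
  a `^ (1 - c) * b `^ c <= (1 - c) * a + c * b.
Proof.
move=> a0 b0 /andP[c0 c1].
have [->|cn0] := eqVneq c 0; first by rewrite subr0 powRr0 powRr1 ?mulr1 ?mul1r ?mul0r ?addr0.
have [->|cn1] := eqVneq c 1; first by rewrite subrr powRr0 powRr1 ?mul1r ?mul0r ?add0r.
have c_gt0 : 0 < c by rewrite lt_neqAle eq_sym cn0.
have c1_gt0 : 0 < 1 - c by rewrite subr_gt0 lt_neqAle cn1.
have p_gt0 : 0 < (1 - c)^-1 by rewrite invr_gt0.
have q_gt0 : 0 < c^-1 by rewrite invr_gt0.
have := @conjugate_powR R (a `^ (1 - c)) (b `^ c) (1 - c)^-1 c^-1
  (powR_ge0 _ _) (powR_ge0 _ _) p_gt0 q_gt0.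
rewrite !invrK -!powRrM !mulfV ?gt_eqF// !powRr1// subrK => /(_ erefl).
by rewrite [_ * (1 - c)]mulrC [b * c]mulrC.
Qed.

Lemma sum_powRN_le (c : R) (N : nat) : 0 <= c < 1 ->
  \sum_(0 <= k < N) k.+1%:R `^ (- c) <= N%:R `^ (1 - c) / (1 - c).
Proof.
move=> /andP[c0 c1]; have c1_gt0 : 0 < 1 - c by rewrite subr_gt0.
elim: N => [|N IH]; first by rewrite big_geq// powR0 ?mul0r// subr_eq0 gt_eqF.
rewrite big_nat_recr//= -natr1 ler_pdivlMr//.
set x : R := N%:R; have x0 : 0 <= x by rewrite ler0n.
have x1_gt0 : 0 < x + 1 by rewrite ltr_wpDl.
set P := (x + 1) `^ (- c).
have P_gt0 : 0 < P by rewrite powR_gt0.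
have x1E : (x + 1) `^ (1 - c) = (x + 1) * P.
  by rewrite /P gt0_powRD// powRr1// ltW.
have amgm : x `^ (1 - c) <= (x + c) * P.
  have c01 : 0 <= c <= 1 by rewrite c0 ltW.
  have := @powR_amgm x (x + 1) c x0 (ltW x1_gt0) c01.
  rewrite (_ : (1 - c) * x + c * (x + 1) = x + c); last by ring.
  have cancel : (x + 1) `^ c * P = 1.
    by rewrite /P -gt0_powRD// subrr powRr0.
  by rewrite -(ler_pM2r P_gt0) -mulrA cancel mulr1.
move: IH; rewrite -/x ler_pdivlMr// x1E => IH; nra.
Qed.

Lemma ger_powRN (a b r : R) : 0 < a -> a <= b -> 0 <= r -> b `^ (- r) <= a `^ (- r).
Proof.
move=> a0 ab r0; rewrite !powRN lef_pV2 ?posrE ?powR_gt0 ?(lt_le_trans a0)//.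
by apply: ge0_ler_powR => //; rewrite nnegrE ltW// (lt_le_trans a0).
Qed.

Definition conv_const (a b : R) := 2 `^ a / (1 - b) + 2 `^ b / (1 - a).

Lemma sum_powRN_conv_le (a b : R) (N : nat) : 0 <= a < 1 -> 0 <= b < 1 -> (0 < N)%N ->
  \sum_(0 <= k < N) (N - k)%:R `^ (- a) * k.+1%:R `^ (- b)
    <= conv_const a b * N%:R `^ (1 - a - b).
Proof.
move=> /andP[a0 a1] /andP[b0 b1] N_gt0.
set x : R := N%:R; have x_gt0 : 0 < x by rewrite ltr0n.
have hx_gt0 : 0 < x / 2 by rewrite divr_gt0.
(* [N - k] and [k + 1] add up to [N + 1], so one of them is at least [N / 2] *)
have term_le k : (k < N)%N -> (N - k)%:R `^ (- a) * k.+1%:R `^ (- b) <=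
    (x / 2) `^ (- a) * k.+1%:R `^ (- b) + (x / 2) `^ (- b) * (N - k)%:R `^ (- a).
  move=> kN; have [hk|hk] := lerP (x / 2) (N - k)%:R.
    by rewrite ler_wpDr ?mulr_ge0 ?powR_ge0// ler_wpM2r ?powR_ge0// ger_powRN.
  rewrite ler_wpDl ?mulr_ge0 ?powR_ge0// mulrC ler_wpM2r ?powR_ge0// ger_powRN//.
  have : (N - k + k.+1 = N.+1)%N by lia.
  move/(congr1 (fun n : nat => n%:R : R)); rewrite natrD -natr1 -/x; lra.
apply: le_trans (ler_sum_nat (fun k kN => term_le k (proj2 (andP kN)))) _.
rewrite big_split /= -!mulr_sumr.
have rev : \sum_(0 <= k < N) (N - k)%:R `^ (- a) = \sum_(0 <= k < N) k.+1%:R `^ (- a).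
  by rewrite big_nat_rev; apply: eq_big_nat => k /andP[_ kN]; congr (_%:R `^ _); lia.
have a01 : 0 <= a < 1 by rewrite a0 a1.
have b01 : 0 <= b < 1 by rewrite b0 b1.
rewrite rev; apply: le_trans (lerD (ler_wpM2l (powR_ge0 _ _) (@sum_powRN_le b N b01))
                                   (ler_wpM2l (powR_ge0 _ _) (@sum_powRN_le a N a01))) _.
have half r : (x / 2) `^ (- r) = 2 `^ r * x `^ (- r).
  by rewrite powRM ?invr_ge0 ?(ltW x_gt0)// powR_inv// opprK mulrC.
have xa : x `^ (1 - a - b) = x `^ (- a) * x `^ (1 - b).
  by rewrite -gt0_powRD//; congr (_ `^ _); ring.
have xb : x `^ (1 - a - b) = x `^ (- b) * x `^ (1 - a).
  by rewrite -gt0_powRD//; congr (_ `^ _); ring.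
rewrite /conv_const mulrDl; apply: lerD; rewrite half le_eqVlt; apply/predU1P; left.
- by rewrite xa; field; rewrite subr_eq0 gt_eqF.
- by rewrite xb; field; rewrite subr_eq0 gt_eqF.
Qed.

Lemma gt1_powR_lt1 (a x : R) : 1 < a -> x < 0 -> a `^ x < 1.
Proof.
move=> a1 x0; rewrite /powR gt_eqF ?(lt_trans ltr01)// expR_lt1.
by rewrite nmulr_rlt0// ln_gt0.
Qed.

End PowerSums.

Section DyadicPartition.
Context {R : realType}.
Implicit Types (s t : R) (n k : nat).

Definition dyadic_mid s t n k := dyadic_pt s t n.+1 k.*2.+1.

Lemma dyadic_ptE s t n k : dyadic_pt s t n k = s + k%:R * ((t - s) / 2 ^+ n).
Proof. by rewrite /dyadic_pt mulrA. Qed.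

Lemma dyadic_midE s t n k :
  dyadic_mid s t n k = s + (k%:R + 2^-1) * ((t - s) / 2 ^+ n).
Proof.
rewrite /dyadic_mid dyadic_ptE -natr1 -muln2 natrM exprS; congr (_ + _).
by field; rewrite expf_neq0 ?pnatr_eq0.
Qed.

Lemma dyadic_pt_double s t n k : dyadic_pt s t n.+1 k.*2 = dyadic_pt s t n k.
Proof.
rewrite !dyadic_ptE -muln2 natrM exprS; congr (_ + _).
by field; rewrite expf_neq0 ?pnatr_eq0.
Qed.

Lemma dyadic_pt_last s t n : dyadic_pt s t n (2 ^ n) = t.
Proof. by rewrite dyadic_ptE natrX mulrC divfK ?expf_neq0 ?pnatr_eq0// addrC subrK. Qed.

Lemma dyadic_mid_bounds s t n k : s < t -> (k < 2 ^ n)%N ->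
  [/\ s <= dyadic_pt s t n k, dyadic_pt s t n k <= dyadic_mid s t n k,
      dyadic_mid s t n k <= dyadic_pt s t n k.+1,
      dyadic_pt s t n k.+1 <= t & s < dyadic_mid s t n k].
Proof.
move=> st kN; set h := (t - s) / 2 ^+ n.
have tE : t = s + (2 ^ n)%:R * h by rewrite -{1}(dyadic_pt_last s t n) dyadic_ptE.
have h_gt0 : 0 < h by rewrite divr_gt0 ?subr_gt0 ?exprn_gt0.
have k0 : 0 <= k%:R :> R by rewrite ler0n.
have kN' : k%:R + 1 <= (2 ^ n)%:R :> R by rewrite natr1 ler_nat.
by rewrite dyadic_midE !dyadic_ptE -/h -[k.+1%:R]natr1; split; nra.
Qed.

Lemma sum_nat_pairs (V : nmodType) (f : nat -> V) N :
  \sum_(0 <= k < N.*2) f k = \sum_(0 <= k < N) (f k.*2 + f k.*2.+1).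
Proof.
elim: N => [|N IH]; first by rewrite !big_geq.
by rewrite doubleS !big_nat_recr //= IH addrA.
Qed.

Variables (X : normedModType R) (J : R -> R -> X).

Lemma dyadic_sum0 s t : dyadic_sum J s t 0 = J t s.
Proof.
by rewrite /dyadic_sum big_ord1 [dyadic_pt s t 0 1](dyadic_pt_last s t 0) dyadic_ptE mul0r addr0.
Qed.

Lemma dyadic_sum_diag s n : J s s = 0 -> dyadic_sum J s s n = 0.
Proof.
move=> Jss; rewrite /dyadic_sum big1// => k _.
by rewrite !dyadic_ptE subrr !(mul0r, mulr0, addr0).
Qed.

Lemma dyadic_sumB s t n :
  dyadic_sum J s t n - dyadic_sum J s t n.+1 =
  \sum_(0 <= k < 2 ^ n)
     deltaJ J (dyadic_pt s t n k.+1) (dyadic_mid s t n k) (dyadic_pt s t n k).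
Proof.
rewrite /dyadic_sum -!(big_mkord xpredT (fun k => J (dyadic_pt s t _ k.+1) (dyadic_pt s t _ k))).
rewrite expnS mul2n sum_nat_pairs -sumrB; apply: eq_bigr => k _.
by rewrite dyadic_pt_double -doubleS dyadic_pt_double /deltaJ opprD addrA addrAC.
Qed.

Lemma dyadic_sum_sub_le s t M :
  `|dyadic_sum J s t M - J t s| <=
  \sum_(0 <= n < M) \sum_(0 <= k < 2 ^ n)
     `|deltaJ J (dyadic_pt s t n k.+1) (dyadic_mid s t n k) (dyadic_pt s t n k)|.
Proof.
elim: M => [|M IH]; first by rewrite big_geq// dyadic_sum0 subrr normr0.
have -> : dyadic_sum J s t M.+1 - J t s =
    (dyadic_sum J s t M - J t s) - (dyadic_sum J s t M - dyadic_sum J s t M.+1).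
  by rewrite opprB [in RHS]addrC addrA subrK.
rewrite big_nat_recr//=; apply: le_trans (ler_normB _ _) _.
by rewrite lerD// dyadic_sumB ler_norm_sum.
Qed.

Lemma dyadic_sum_sub_weighted_le (l : nat) (A : 'I_l -> R)
    (w : 'I_l -> R -> R -> R -> R) s t M :
  0 <= s -> s < t ->
  (forall u m v, s <= u -> u <= m -> m <= v -> v <= t -> 0 < m ->
     `|deltaJ J v m u| <= \sum_(i < l) A i * w i u m v) ->
  `|dyadic_sum J s t M - J t s| <=
  \sum_(i < l) A i * \sum_(0 <= n < M) \sum_(0 <= k < 2 ^ n)
     w i (dyadic_pt s t n k) (dyadic_mid s t n k) (dyadic_pt s t n k.+1).
Proof.
move=> s0 st hw; apply: le_trans (dyadic_sum_sub_le s t M) _.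
apply: (@le_trans _ _ (\sum_(0 <= n < M) \sum_(0 <= k < 2 ^ n) \sum_(i < l)
   A i * w i (dyadic_pt s t n k) (dyadic_mid s t n k) (dyadic_pt s t n k.+1))).
  apply: ler_sum_nat => n _; apply: ler_sum_nat => k /andP[_ kN].
  have [su um mv vt sm] := dyadic_mid_bounds s t n k st kN.
  exact: hw um mv vt (le_lt_trans s0 sm).
under eq_bigr do rewrite exchange_big; rewrite exchange_big /=.
by apply: ler_sum => i _; rewrite mulr_sumr; apply: ler_sum => n _; rewrite mulr_sumr.
Qed.

End DyadicPartition.

Section WeightEstimates.
Context {R : realType}.

Definition delta_weight (mu lam nu eps t u m v : R) :=
  `|t - u| `^ (- lam) * `|u - m| `^ nu * `|m - v| `^ (mu - nu) * m `^ (- eps).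

Lemma pospart_ge0 (x : R) : 0 <= pospart x.
Proof. by rewrite /pospart le_max lexx orbT. Qed.

Lemma mul_powR_pospart_le (s m om eps : R) : 0 <= s <= m -> 0 < m <= 1 -> 0 <= om ->
  s `^ om * m `^ (- eps) <= m `^ (- pospart (eps - om)).
Proof.
move=> /andP[s0 sm] /andP[m_gt0 m1] om0.
apply: (@le_trans _ _ (m `^ om * m `^ (- eps))).
  by rewrite ler_wpM2r ?powR_ge0//; apply: ge0_ler_powR; rewrite ?nnegrE ?(ltW m_gt0).
rewrite -gt0_powRD// /pospart; have [e|e] := leP (eps - om) 0.
  by rewrite oppr0 ger_powR ?m_gt0//; lra.
by rewrite opprB addrC.
Qed.

Section Grid.
Variables (mu lam nu eps s h : R) (N k : nat).

Let m := s + (k%:R + 2^-1) * h.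

Lemma delta_weight_gridE : 0 < h -> (k < N)%N ->
  delta_weight mu lam nu eps (s + N%:R * h) (s + k%:R * h) m (s + k.+1%:R * h)
  = ((N - k)%:R * h) `^ (- lam) * (h / 2) `^ mu * m `^ (- eps).
Proof.
move=> h_gt0 kN.
have tu : `|s + N%:R * h - (s + k%:R * h)| = (N - k)%:R * h.
  rewrite (_ : _ - _ = (N - k)%:R * h); last by rewrite natrB ?(ltnW kN); ring.
  by rewrite ger0_norm// mulr_ge0 ?ler0n ?(ltW h_gt0).
have um : `|s + k%:R * h - m| = h / 2.
  by rewrite (_ : _ - _ = - (h / 2)) ?normrN ?gtr0_norm ?divr_gt0// /m; field.
have mv : `|m - (s + k.+1%:R * h)| = h / 2.
  rewrite (_ : _ - _ = - (h / 2)) ?normrN ?gtr0_norm ?divr_gt0//.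
  by rewrite /m -[k.+1%:R]natr1; field.
rewrite /delta_weight tu um mv (_ : (h / 2) `^ mu = (h / 2) `^ nu * (h / 2) `^ (mu - nu)).
  by rewrite mulrA.
by rewrite -gt0_powRD ?divr_gt0// addrC subrK.
Qed.

Lemma delta_weight_grid_le (om al : R) :
  0 < h -> (k < N)%N -> 0 <= al <= lam -> 0 <= om -> 0 <= s -> s + N%:R * h <= 1 ->
  s `^ om * delta_weight mu lam nu eps (s + N%:R * h) (s + k%:R * h) m (s + k.+1%:R * h)
  <= (2^-1) `^ (mu - pospart (eps - om))
     * ((N - k)%:R `^ (- al) * k.+1%:R `^ (- pospart (eps - om)))
     * h `^ (mu - lam - pospart (eps - om)).
Proof.
move=> h_gt0 kN /andP[al0 al_lam] om0 s0 t1; set b := pospart _.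
rewrite delta_weight_gridE//.
have k0 : 0 <= k%:R :> R by rewrite ler0n.
have kN' : k%:R + 1 <= N%:R :> R by rewrite natr1 ler_nat.
have kh : 0 <= k%:R * h := mulr_ge0 k0 (ltW h_gt0).
have kNh : k%:R * h + h <= N%:R * h by rewrite -{2}(mul1r h) -mulrDl ler_pM2r.
have mE : m = s + k%:R * h + h / 2 by rewrite /m; field.
have sm : s <= m by rewrite mE; lra.
have m1 : m <= 1 by rewrite mE; lra.
have km : k.+1%:R * (h / 2) <= m by rewrite mE -natr1 mulrDl mul1r; lra.
have bound_m : s `^ om * m `^ (- eps) <= (k.+1%:R * (h / 2)) `^ (- b).
  have m_gt0 : 0 < m by rewrite mE; lra.
  apply: le_trans (@mul_powR_pospart_le s m om eps _ _ om0) _; rewrite ?s0 ?sm ?m_gt0//.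
  by rewrite ger_powRN ?pospart_ge0// mulr_gt0 ?divr_gt0.
have bound_tu : ((N - k)%:R * h) `^ (- lam) <= (N - k)%:R `^ (- al) * h `^ (- lam).
  rewrite powRM ?ler0n ?(ltW h_gt0)// ler_wpM2r ?powR_ge0//.
  by apply: ler_powR; rewrite ?lerN2// ler1n subn_gt0.
apply: (@le_trans _ _ ((k.+1%:R * (h / 2)) `^ (- b)
     * ((N - k)%:R `^ (- al) * h `^ (- lam) * (h / 2) `^ mu))).
  rewrite mulrCA mulrC; apply: ler_pM; rewrite ?mulr_ge0 ?powR_ge0//.
  by rewrite ler_wpM2r ?powR_ge0.
have hE r : (h / 2) `^ r = h `^ r * (2^-1) `^ r by rewrite powRM ?invr_ge0 ?(ltW h_gt0).
rewrite powRM ?ler0n ?divr_ge0 ?(ltW h_gt0)// !hE !gt0_powRD ?invr_gt0//.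
by rewrite le_eqVlt; apply/predU1P; left; ring.
Qed.

End Grid.

Lemma dyadic_level_le (mu lam nu eps om al s t : R) (n : nat) :
  0 <= al <= lam -> al < 1 -> 0 <= om -> eps < 1 ->
  0 <= s -> s < t -> t <= 1 ->
  s `^ om * \sum_(0 <= k < 2 ^ n) delta_weight mu lam nu eps t
      (dyadic_pt s t n k) (dyadic_mid s t n k) (dyadic_pt s t n k.+1)
  <= (2^-1) `^ (mu - pospart (eps - om)) * conv_const al (pospart (eps - om))
     * (t - s) `^ (mu - lam - pospart (eps - om)) * (2 `^ (1 - al - mu + lam)) ^+ n.
Proof.
move=> al_lam al1 om0 eps1 s0 st t1; set b := pospart _.
have b01 : 0 <= b < 1 by rewrite pospart_ge0 /b /pospart gt_max ltr01 andbT; lra.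
have al01 : 0 <= al < 1 by case/andP: al_lam => -> _.
have N_gt0 : (0 < 2 ^ n)%N by rewrite expn_gt0.
have NR_gt0 : 0 < 2 ^+ n :> R by rewrite exprn_gt0.
set h := (t - s) / 2 ^+ n.
have h_gt0 : 0 < h by rewrite divr_gt0 ?subr_gt0.
have tE : t = s + (2 ^ n)%:R * h by rewrite -{1}(dyadic_pt_last s t n) dyadic_ptE.
rewrite mulr_sumr; apply: (@le_trans _ _ (\sum_(0 <= k < 2 ^ n) (2^-1) `^ (mu - b)
    * ((2 ^ n - k)%:R `^ (- al) * k.+1%:R `^ (- b)) * h `^ (mu - lam - b))).
  apply: ler_sum_nat => k /andP[_ kN]; rewrite dyadic_midE !dyadic_ptE -/h {1}tE.
  by apply: delta_weight_grid_le; rewrite // -tE.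
rewrite -big_distrl -big_distrr /=.
apply: (@le_trans _ _ ((2^-1) `^ (mu - b)
    * (conv_const al b * (2 ^ n)%:R `^ (1 - al - b)) * h `^ (mu - lam - b))).
  by rewrite ler_wpM2r ?powR_ge0// ler_wpM2l ?powR_ge0// sum_powRN_conv_le.
have pow2n x : (2 ^+ n : R) `^ x = (2 `^ x) ^+ n.
  by rewrite -powR_mulrn// powRAC powR_mulrn// powR_ge0.
have hE : h `^ (mu - lam - b) = (t - s) `^ (mu - lam - b) * (2 ^+ n) `^ (- (mu - lam - b)).
  by rewrite /h powRM ?invr_ge0 ?subr_ge0 ?(ltW st) ?(ltW NR_gt0)// powR_inv ?(ltW NR_gt0).
have qE : (2 `^ (1 - al - mu + lam)) ^+ n
    = (2 ^+ n) `^ (1 - al - b) * (2 ^+ n) `^ (- (mu - lam - b)).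
  by rewrite -pow2n -gt0_powRD//; congr (_ `^ _); ring.
by rewrite hE qE natrX le_eqVlt; apply/predU1P; left; ring.
Qed.

(* [al] replaces [lam] as the exponent of [|t - u|]: [al < 1] keeps one dyadic
   level of order [2^(n (1 - al - b))], and [lam + 1 - mu < al] makes the levels
   decay geometrically. *)
Lemma exists_decay_exponent (mu lam : R) : 1 < mu -> 0 <= lam < mu ->
  exists al, [/\ 0 <= al <= lam, al < 1 & lam + 1 - mu < al].
Proof.
move=> mu1 /andP[lam0 lam_mu].
set c := Num.max 0 (lam + 1 - mu).
have c0 : 0 <= c by rewrite le_max lexx.
have c_ge : lam + 1 - mu <= c by rewrite le_max lexx orbT.
have c1 : c < 1 by rewrite gt_max ltr01 /=; lra.
have th0 : 0 <= (1 + c) / 2 by lra.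
have th1 : (1 + c) / 2 < 1 by lra.
have th_gt : lam + 1 - mu < (1 + c) / 2 by lra.
have lam_gt : lam + 1 - mu < lam by lra.
exists (Num.min lam ((1 + c) / 2)).
by rewrite le_min ge_min gt_min lt_min lexx lam0 th0 th1 th_gt lam_gt orbT.
Qed.

Lemma delta_weight_series_le (mu lam nu eps om : R) :
  1 < mu -> 0 <= lam < mu -> 0 <= om -> eps < 1 ->
  exists C, 0 <= C /\ forall s t M, 0 <= s -> s < t -> t <= 1 ->
    s `^ om * \sum_(0 <= n < M) \sum_(0 <= k < 2 ^ n) delta_weight mu lam nu eps t
        (dyadic_pt s t n k) (dyadic_mid s t n k) (dyadic_pt s t n k.+1)
    <= C * (t - s) `^ (mu - lam - pospart (eps - om)).
Proof.
move=> mu1 lam_mu om0 eps1.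
have [al [al_lam al1 al_gt]] := @exists_decay_exponent mu lam mu1 lam_mu.
set b := pospart (eps - om); set q : R := 2 `^ (1 - al - mu + lam).
have q_gt0 : 0 < q by rewrite powR_gt0.
have q_lt1 : q < 1 by rewrite gt1_powR_lt1 ?ltr1n//; lra.
set a := (2^-1) `^ (mu - b) * conv_const al b.
have b1 : b < 1 by rewrite /b /pospart gt_max ltr01 andbT; lra.
have a_ge0 : 0 <= a.
  by rewrite mulr_ge0 ?powR_ge0// addr_ge0// divr_ge0 ?powR_ge0// subr_ge0 ?(ltW b1) ?(ltW al1).
exists (a / (1 - q)); split; first by rewrite divr_ge0 // subr_ge0 ltW.
move=> s t M s0 st t1; rewrite mulr_sumr.
apply: le_trans (ler_sum_nat (fun n _ => @dyadic_level_le mu lam nu eps om al s t n al_lam al1 om0 eps1 s0 st t1)) _.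
have := geometric_le_lim M (mulr_ge0 a_ge0 (powR_ge0 (t - s) (mu - lam - b))) q_gt0.
rewrite ger0_norm ?(ltW q_gt0)// seriesEnat /= => /(_ q_lt1) /le_trans; apply.
by rewrite le_eqVlt; apply/predU1P; left; rewrite /a; ring.
Qed.

End WeightEstimates.

Theorem lemma2p13 (R : realType) (l : nat)
  (mu lam nu eps : 'I_l -> R) (omega : R) :
  (forall i, 1 < mu i) ->
  (forall i, 0 <= lam i < mu i) ->
  (forall i, 0 <= nu i <= mu i) ->
  (forall i, 0 <= eps i < 1) ->
  0 <= omega <= \big[Num.max/0]_(i < l) eps i ->
  (forall i, pospart (eps i - omega) < mu i - lam i) ->
  exists C : R,
  forall (X : completeNormedModType R) (T : R) (J : R -> R -> X)
         (A : 'I_l -> R) (s t : R) (JJ : X),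
    0 < T <= 1 ->
    {within [set p : R * R | 0 <= p.2 <= p.1 /\ p.1 <= T],
       continuous (fun p : R * R => J p.1 p.2)} ->
    (forall u, 0 <= u <= T -> J u u = 0) ->
    0 <= s -> s <= t -> t <= T ->
    dyadic_sum J s t n @[n --> \oo] --> JJ ->
    (forall i, 0 <= A i) ->
    (forall u m v, s <= u -> u <= m -> m <= v -> v <= t -> 0 < m ->
       `|deltaJ J v m u| <=
         \sum_(i < l) A i * `|t - u| `^ (- lam i) * `|u - m| `^ (nu i)
                          * `|m - v| `^ (mu i - nu i) * m `^ (- eps i)) ->
    s `^ omega * `|JJ - J t s| <=
      C * \sum_(i < l) A i * `|t - s| `^ (mu i - lam i - pospart (eps i - omega)).
Proof.
move=> mu1 lam_mu _ eps01 /andP[om0 _] _.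
have /choice[C hC] := fun i => @delta_weight_series_le R (mu i) (lam i) (nu i) (eps i)
  omega (mu1 i) (lam_mu i) om0 (proj2 (andP (eps01 i))).
exists (\sum_(i < l) C i) => X T J A s t JJ /andP[_ T1] _ J0 s0 st tT JJ_lim A0 hdelta.
pose rhs := (\sum_(i < l) C i)
  * \sum_(i < l) A i * `|t - s| `^ (mu i - lam i - pospart (eps i - omega)).
have rhs_ge0 : 0 <= rhs.
  by rewrite mulr_ge0 ?sumr_ge0// => i _; [case: (hC i) | rewrite mulr_ge0 ?powR_ge0].
have cvg_lhs : s `^ omega * `|dyadic_sum J s t n - J t s| @[n --> \oo] -->
    s `^ omega * `|JJ - J t s|.
  by apply: cvgMl_tmp; apply: cvg_norm; apply: cvgB => //; exact: cvg_cst.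
apply: (closed_cvg _ (@closed_le R rhs) _ _ cvg_lhs).
apply: nearW => M; case: ltgtP st => // [st _|ts _]; last first.
  subst t; have Jss : J s s = 0 by apply: J0; rewrite s0.
  by rewrite dyadic_sum_diag // Jss subrr normr0 mulr0.
have hdelta_w u m v : s <= u -> u <= m -> m <= v -> v <= t -> 0 < m ->
    `|deltaJ J v m u| <= \sum_(i < l) A i * delta_weight (mu i) (lam i) (nu i) (eps i) t u m v.
  by move=> *; under eq_bigr do rewrite /delta_weight !mulrA; exact: hdelta.
apply: le_trans (ler_wpM2l (powR_ge0 s omega) (@dyadic_sum_sub_weighted_le _ X J l A
  (fun i => delta_weight (mu i) (lam i) (nu i) (eps i) t) s t M s0 st hdelta_w)) _.
rewrite mulr_sumr [leRHS]mulr_sumr; apply: ler_sum => i _.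
rewrite mulrCA [leRHS]mulrCA ler_wpM2l//.
have [_ C_le] := hC i; apply: le_trans (C_le s t M s0 st (le_trans tT T1)) _.
rewrite gtr0_norm ?subr_gt0// ler_wpM2r ?powR_ge0//.
by rewrite (bigD1 i)//= lerDl sumr_ge0// => j _; case: (hC j).
Qed.
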